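(* For $n\ge 2$, let $\mathscr{V}_n=\langle Q,\{a,b\},\delta\rangle$ with $Q=\{0,1,\dots,n-1\}$, where $\delta(i,b)=i+1$ for $0\le i\le n-2$ and $\delta(n-1,b)=0$; $\delta(i,a)=i+1$ for $0\le i\le n-3$, $\delta(n-2,a)=0$ and $\delta(n-1,a)=0$. Then $sc(Syn(\mathscr{V}_n))=2^n-n$.
   Context: For a DFA $\mathscr{A}=\langle Q,\Sigma,\delta\rangle$ (total transition function, extended to words), $Syn(\mathscr{A})$ is the set of words $w\in\Sigma^*$ such that $\delta(q,w)=\delta(q',w)$ for all $q,q'\in Q$. The state complexity $sc(L)$ of a regular language $L$ is the number of states of the minimal (complete) DFA recognizing $L$. *)

From mathcomp Require Import all_boot.
Set Implicit Arguments. Unset Strict Implicit. Unset Printing Implicit Defensive.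

Inductive letter := La | Lb.

Definition run (Q A : Type) (delta : Q -> A -> Q) (q : Q) (w : seq A) : Q :=
  foldl delta q w.

Definition Syn (Q : finType) (A : Type) (delta : Q -> A -> Q) : pred (seq A) :=
  fun w => [forall q : Q, forall q' : Q, run delta q w == run delta q' w].

Record dfa (A : Type) := DFA {
  dstate : finType;
  dinit : dstate;
  dtrans : dstate -> A -> dstate;
  dfinal : pred dstate }.

Definition accepts (A : Type) (D : dfa A) (w : seq A) : bool :=
  @dfinal A D (run (@dtrans A D) (@dinit A D) w).

Definition recognizes (A : Type) (D : dfa A) (L : pred (seq A)) : Prop :=
  forall w, accepts D w = L w.

Definition state_complexity (A : Type) (L : pred (seq A)) (k : nat) : Prop :=
  (exists D : dfa A, recognizes D L /\ #|dstate D| = k) /\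
  (forall D : dfa A, recognizes D L -> k <= #|dstate D|).

(* The automaton V_n, states Q = {0,...,n-1} represented as 'I_(n.-1.+1)
   (which is 'I_n for n >= 1). *)
Definition Vtrans (n : nat) (q : 'I_n.-1.+1) (c : letter) : 'I_n.-1.+1 :=
  match c with
  | Lb => if q.+1 < n then inord q.+1 else ord0
  | La => if q.+2 < n then inord q.+1 else ord0
  end.

(* Syn(d) is recognized by the automaton whose states are the images [Q.w] of
   the state set under words, with all singletons merged into the empty set
   (the accepting sink); it has 2^|Q| - |Q| states.  For V_n this automaton is
   minimal.  Every set of size >= 2 is an image: rotate it by a power of [b] so
   that it contains 0 but not n-1; it is then the [a]-image of a larger set.
   Two distinct states are told apart by a word that sends a chosen state y to
   n-2 and every other state to n-1. *)

From HB Require Import structures.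
From mathcomp Require Import all_boot ssralg zmodp zify.
Set Implicit Arguments. Unset Strict Implicit. Unset Printing Implicit Defensive.
Import GRing.Theory.

Lemma run_cat (Q A : Type) (d : Q -> A -> Q) q u v :
  run d q (u ++ v) = run d (run d q u) v.
Proof. exact: foldl_cat. Qed.

Lemma card_set_neq1 (T : finType) :
  #|[pred S : {set T} | #|S| != 1]| = 2 ^ #|T| - #|T|.
Proof.
have card_singletons : #|[set S : {set T} | #|S| == 1]| = #|T|.
  rewrite -(card_imset _ (@set1_inj T)); apply: eq_card => S.
  by rewrite inE; apply/cards1P/imsetP => [[x ->]|[x _ ->]]; exists x.
have card_sets : #|{: {set T}}| = 2 ^ #|T|.
  by rewrite -cardsT -(card_powerset [set: T]) powersetT cardsT.
rewrite -card_sets -card_singletons -(cardsC [set S : {set T} | #|S| == 1]) addKn.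
by apply: eq_card => S; rewrite !inE.
Qed.

Notation syn_state Q := {S : {set Q} | #|S| != 1}.

Section SubsetAutomaton.

Variables (Q : finType) (A : Type) (d : Q -> A -> Q).

Definition run_set (S : {set Q}) u : {set Q} := [set run d q u | q in S].

Lemma run_set_nil S : run_set S [::] = S.
Proof. by rewrite /run_set imset_id. Qed.

Lemma run_set_cat S u v : run_set S (u ++ v) = run_set (run_set S u) v.
Proof. by rewrite /run_set -imset_comp; apply: eq_imset => q; rewrite /= run_cat. Qed.

Definition synchronizes (S : {set Q}) v := #|run_set S v| <= 1.

Lemma Syn_synchronizes w : Syn d w = synchronizes setT w.
Proof.
apply/forallP/card_le1_eqP => [sync _ _ /imsetP[q _ ->] /imsetP[q' _ ->]|sync q].
  exact/eqP/(forallP (sync q')).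
by apply/forallP => q'; apply/eqP/sync; apply: imset_f; rewrite inE.
Qed.

Lemma Syn_cat u v : Syn d (u ++ v) = synchronizes (run_set setT u) v.
Proof. by rewrite Syn_synchronizes /synchronizes run_set_cat. Qed.

(* Singletons are merged with [set0]: both are synchronized by every word. *)
Definition collapse (X : {set Q}) : {set Q} := if #|X| == 1 then set0 else X.

Lemma card_collapse_neq1 X : #|collapse X| != 1.
Proof. by rewrite /collapse; case: ifP => [_|->]; rewrite ?cards0. Qed.

Lemma collapse_eq0 X : (collapse X == set0) = (#|X| <= 1).
Proof.
rewrite /collapse; case: ifPn => [/eqP-> | X_neq1]; first by rewrite eqxx.
by rewrite -cards_eq0 leq_eqVlt (negbTE X_neq1) ltnS leqn0.
Qed.

Lemma synchronizes_collapse X v : synchronizes (collapse X) v = synchronizes X v.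
Proof.
rewrite /collapse; case: ifPn => // /cards1P[x ->].
by rewrite /synchronizes /run_set imset0 imset_set1 cards0 cards1.
Qed.

Lemma collapse_run_set X v : collapse (run_set (collapse X) v) = collapse (run_set X v).
Proof.
rewrite {2}/collapse; case: ifPn => // /cards1P[x ->].
by rewrite /collapse /run_set imset0 imset_set1 cards0 cards1.
Qed.

Definition syn_state_of X : syn_state Q := exist _ (collapse X) (card_collapse_neq1 X).

Definition syn_dfa : dfa A :=
  @DFA A (syn_state Q) (syn_state_of setT)
    (fun s c => syn_state_of (run_set (val s) [:: c])) (fun s => val s == set0).

Lemma syn_dfa_run w :
  val (run (@dtrans _ syn_dfa) (@dinit _ syn_dfa) w) = collapse (run_set setT w).
Proof.
elim/last_ind: w => [|w c IH]; first by rewrite run_set_nil.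
by rewrite -cats1 run_cat run_set_cat /= IH collapse_run_set.
Qed.

Lemma syn_dfa_recognizes : recognizes syn_dfa (Syn d).
Proof. by move=> w; rewrite /accepts /= syn_dfa_run collapse_eq0 Syn_synchronizes. Qed.

Lemma card_syn_state : #|{: syn_state Q}| = 2 ^ #|Q| - #|Q|.
Proof. by rewrite card_sig card_set_neq1. Qed.

End SubsetAutomaton.

Lemma dfa_card_ge_distinguishable (A : Type) (L : pred (seq A))
    (I : finType) (w : I -> seq A) :
  (forall i j, i != j -> exists v, L (w i ++ v) != L (w j ++ v)) ->
  forall D : dfa A, recognizes D L -> #|I| <= #|dstate D|.
Proof.
move=> distinct D recD; pose f i := run (@dtrans _ D) (@dinit _ D) (w i).
suff /card_imset <- : injective f by exact: max_card.
move=> i j fij; apply: contraTeq isT => /distinct[v].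
by rewrite -!recD /accepts !run_cat -/(f i) -/(f j) fij eqxx.
Qed.

Lemma syn_dfa_minimal (Q : finType) (A : choiceType) (d : Q -> A -> Q) :
  (forall S : syn_state Q, exists u, collapse (run_set d setT u) = val S) ->
  (forall S T : syn_state Q, S != T ->
     exists v, synchronizes d (val S) v != synchronizes d (val T) v) ->
  forall D : dfa A, recognizes D (Syn d) -> 2 ^ #|Q| - #|Q| <= #|dstate D|.
Proof.
move=> reach distinct D recD; rewrite -card_syn_state.
have reach_eqb (S : syn_state Q) : exists u, collapse (run_set d setT u) == val S.
  by have [u reach_u] := reach S; exists u; apply/eqP.
pose w (S : syn_state Q) := xchoose (reach_eqb S).
have w_reaches S : collapse (run_set d setT (w S)) = val S.
  exact/eqP/(xchooseP (reach_eqb S)).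
apply: (@dfa_card_ge_distinguishable A (Syn d) _ w _ D recD) => S T /distinct[v].
by rewrite -w_reaches -(w_reaches T) !synchronizes_collapse -!Syn_cat; exists v.
Qed.

Definition letter_to_bool (c : letter) : bool := if c is Lb then true else false.
Definition bool_to_letter (b : bool) : letter := if b then Lb else La.
Lemma letter_to_boolK : cancel letter_to_bool bool_to_letter. Proof. by case. Qed.
HB.instance Definition _ := Finite.copy letter (can_type letter_to_boolK).

Lemma Zp_set_boundary p (S : {set 'I_p.+2}) :
  S != set0 -> S != setT -> exists2 x, x \in S & (x - 1)%R \notin S.
Proof.
case/set0Pn => y yS; rewrite -subTset => /subsetPn[z _ zS].
apply/exists_inP; apply: contraR zS => /exists_inPn pred_in_S.
have y_sub_in_S k : (y - k%:R)%R \in S.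
  elim: k => [|k IH]; first by rewrite subr0.
  by move: (pred_in_S _ IH); rewrite negbK mulrSr opprD addrA.
by rewrite -[z](subKr y) -[(y - z)%R]natr_Zp.
Qed.

Section Vn.

Variable m : nat.
Local Notation n := m.+2.
Local Notation V := (@Vtrans n : 'I_n -> letter -> 'I_n).

Lemma val_Vtrans_b (q : 'I_n) : V q Lb = q.+1 %% n :> nat.
Proof.
rewrite /Vtrans /=; case: ifP => [lt_q1|/negbT]; first by rewrite inordK ?modn_small.
by rewrite -leqNgt => le_n_q1; rewrite (_ : q.+1 = n) ?modnn //; have := ltn_ord q; lia.
Qed.

Lemma Vtrans_b (q : 'I_n) : V q Lb = (q + 1)%R.
Proof. by apply: ord_inj; rewrite val_Vtrans_b /= (modn_small (_ : 1 < n)) // addn1. Qed.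

Lemma val_Vtrans_a (q : 'I_n) : V q La = (if q < m then q.+1 else 0) :> nat.
Proof. by rewrite /Vtrans ltnS ltnS; case: ifP => lt_qm //; rewrite inordK //; lia. Qed.

Lemma run_b q k : run V q (nseq k Lb) = (q + k%:R)%R.
Proof.
elim: k q => [|k IH] q; first by rewrite addr0.
by rewrite -[LHS]/(run V (V q Lb) _) IH Vtrans_b -addrA -mulrS.
Qed.

Lemma run_a_le (q : 'I_n) k : q <= m -> run V q (nseq k La) = (q + k) %% m.+1 :> nat.
Proof.
elim: k q => [|k IH] q le_qm; first by rewrite addn0 modn_small.
have le_aq_m : V q La <= m by rewrite val_Vtrans_a; case: ifP => //; lia.
rewrite -[run V q _]/(run V (V q La) _) IH // val_Vtrans_a; apply/eqP.
case: ifP => [_|/negbT]; first by rewrite addSnnS.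
by rewrite -leqNgt => le_mq; rewrite (_ : q = m :> nat) 1?addnS -?addSn ?modnDl //; lia.
Qed.

(* [a^(n-1)] fixes [0..n-2] and sends [n-1] to [n-2], so [a^(n-1) b] is the
   saturating increment [q |-> min(q+1, n-1)]. *)
Definition sat_word := rcons (nseq m.+1 La) Lb.

Lemma run_sat_word (q : 'I_n) : run V q sat_word = minn q.+1 m.+1 :> nat.
Proof.
have a_cycle : nat_of_ord (run V q (nseq m.+1 La)) = if q <= m then q : nat else m.
  case: leqP => [le_qm | lt_mq]; first by rewrite run_a_le // modnDr modn_small.
  have a_q : V q La = 0 :> nat by rewrite val_Vtrans_a; case: ifP => //; lia.
  by rewrite -[run V q _]/(run V (V q La) _) run_a_le a_q // modn_small.
rewrite /sat_word -cats1 run_cat val_Vtrans_b a_cycle.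
by case: (leqP q m) => [le_qm | lt_mq]; rewrite modn_small; lia.
Qed.

Lemma run_sat_words (q : 'I_n) k :
  run V q (flatten (nseq k sat_word)) = minn (q + k) m.+1 :> nat.
Proof.
elim: k q => [|k IH] q /=; first by rewrite addn0; have := ltn_ord q; lia.
by rewrite run_cat IH run_sat_word; lia.
Qed.

Definition sync_word := flatten (nseq m.+1 sat_word).

Lemma run_set_sync_word : run_set V setT sync_word = [set ord_max].
Proof.
apply/setP => t; rewrite inE; apply/imsetP/eqP => [[q _ ->] | ->].
  by apply: ord_inj; rewrite run_sat_words /=; lia.
by exists ord0; rewrite ?inE //; apply: ord_inj; rewrite run_sat_words /=; lia.
Qed.

Definition sep_word (y : 'I_n) := nseq (- y)%R Lb ++ flatten (nseq m sat_word).

Lemma run_sep_word (y q : 'I_n) :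
  run V q (sep_word y) = (if q == y then m else m.+1) :> nat.
Proof.
rewrite run_cat run_b natr_Zp run_sat_words.
have [-> | neq_qy] := eqVneq q y; first by rewrite subrr /=; lia.
have : 0 < nat_of_ord (q - y)%R.
  by rewrite lt0n; apply: contra neq_qy => qy0; rewrite -subr_eq0.
lia.
Qed.

Lemma sep_word_separates (S T : {set 'I_n}) y :
  y \notin S -> y \in T -> 1 < #|T| ->
  synchronizes V S (sep_word y) && ~~ synchronizes V T (sep_word y).
Proof.
move=> yS yT T_gt1; apply/andP; split.
  apply/card_le1_eqP => _ _ /imsetP[q qS ->] /imsetP[q' q'S ->].
  have neq_y p : p \in S -> (p == y) = false.
    by move=> pS; apply: contraNF yS => /eqP <-.
  by apply: ord_inj; rewrite !run_sep_word !neq_y.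
have /card_gt0P[y' /setD1P[y'y y'T]] : 0 < #|T :\ y|.
  by move: T_gt1; rewrite (cardsD1 y) yT.
rewrite /synchronizes -ltnNge; apply/card_gt1P.
exists (run V y (sep_word y)), (run V y' (sep_word y)); split; try exact: imset_f.
by rewrite -(inj_eq (@ord_inj n)) !run_sep_word eqxx (negbTE y'y) neq_ltn ltnSn.
Qed.

Lemma Vtrans_a_max : V ord_max La = 0%R.
Proof. by apply: ord_inj; rewrite val_Vtrans_a ltnNge leqnSn. Qed.

Lemma Vtrans_a_pred_max : V (inord m) La = 0%R.
Proof. by apply: ord_inj; rewrite val_Vtrans_a inordK ?ltnn. Qed.

Lemma Vtrans_a_imset_preimage (T : {set 'I_n}) :
  ord_max \notin T -> V^~ La @: (V^~ La @^-1: T) = T.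
Proof.
move=> Tmax; apply/setP => t.
apply/imsetP/idP => [[q] | tT]; first by rewrite inE => ? ->.
have [t0 | t_pos] := posnP t.
  have t_eq0 : t = 0%R by apply: ord_inj.
  by exists ord_max; rewrite ?inE Vtrans_a_max -t_eq0.
have lt_t_max : t < m.+1.
  rewrite ltn_neqAle -ltnS ltn_ord andbT; apply: contraNneq Tmax => t_max.
  by rewrite (_ : ord_max = t) //; apply: ord_inj; rewrite t_max.
have a_pred : V (inord t.-1) La = t.
  by apply: ord_inj; rewrite val_Vtrans_a inordK; [case: ifP |]; lia.
by exists (inord t.-1); rewrite ?inE a_pred.
Qed.

Lemma card_Vtrans_a_preimage_gt (T : {set 'I_n}) : ord0 \in T -> ord_max \notin T ->
  #|T| < #|V^~ La @^-1: T|.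
Proof.
move=> T0 Tmax.
rewrite -{1}(Vtrans_a_imset_preimage Tmax) ltn_neqAle leq_imset_card andbT.
apply/negP => /imset_injP inj.
have : inord m = ord_max :> 'I_n.
  by apply: inj; rewrite ?inE ?Vtrans_a_pred_max ?Vtrans_a_max.
by move/(congr1 val); rewrite /= inordK //; lia.
Qed.

Definition reachable (S : {set 'I_n}) := exists u, run_set V setT u = S.

Lemma reachable_shift S (x : 'I_n) :
  reachable S -> reachable [set (q + x)%R | q : 'I_n in S].
Proof.
case=> u <-; exists (u ++ nseq x Lb); rewrite run_set_cat.
by apply: eq_imset => q; rewrite run_b natr_Zp.
Qed.

Lemma reachable_a P : reachable P -> reachable (V^~ La @: P).
Proof. by case=> u <-; exists (u ++ [:: La]); rewrite run_set_cat. Qed.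

Lemma ord_max_eqN1 : ord_max = (-1)%R :> 'I_n.
Proof. by apply: ord_inj; rewrite /= (modn_small (_ : 1 < n)) // subn1 modn_small. Qed.

Lemma reachable_card_gt1 (S : {set 'I_n}) : 1 < #|S| -> reachable S.
Proof.
move=> S_gt1; have [k] := ubnP (n - #|S|); elim: k S S_gt1 => // k IH S S_gt1 lt_S_k.
have [-> | S_neqT] := eqVneq S setT; first by exists [::]; rewrite run_set_nil.
have S_neq0 : S != set0 by rewrite -card_gt0 ltnW.
have [x xS pred_x] := Zp_set_boundary S_neq0 S_neqT.
pose T := [set (q - x)%R | q : 'I_n in S].
have S_shift : S = [set (q + x)%R | q : 'I_n in T].
  by rewrite -imset_comp -[LHS]imset_id; apply: eq_imset => q /=; rewrite subrK.
have card_T : #|T| = #|S| by apply: card_imset; exact: addIr.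
have T0 : ord0 \in T by apply/imsetP; exists x; rewrite ?subrr.
have Tmax : ord_max \notin T.
  apply: contra pred_x => /imsetP[q qS q_x].
  by rewrite (_ : (x - 1)%R = q) // -ord_max_eqN1 q_x addrC subrK.
have := card_Vtrans_a_preimage_gt T0 Tmax; rewrite card_T => card_P.
have := max_card (V^~ La @^-1: T); rewrite card_ord => le_P_n.
rewrite S_shift -(Vtrans_a_imset_preimage Tmax); apply/reachable_shift/reachable_a/IH.
  exact: ltn_trans card_P.
move: lt_S_k card_P le_P_n; set a := #|S|; set b := #|_ @^-1: T|; lia.
Qed.

Lemma V_syn_state_reachable (S : syn_state 'I_n) :
  exists u, collapse (run_set V setT u) = val S.
Proof.
case: S => S /= S_neq1; have [-> | S_neq0] := eqVneq S set0.
  by exists sync_word; rewrite run_set_sync_word /collapse cards1.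
have [|u reach_u] := reachable_card_gt1 (S := S).
  by move: S_neq0 S_neq1; rewrite -card_gt0; case: #|S| => [|[]].
by exists u; rewrite /collapse reach_u (negbTE S_neq1).
Qed.

Lemma V_syn_states_distinguishable (S T : syn_state 'I_n) : S != T ->
  exists v, synchronizes V (val S) v != synchronizes V (val T) v.
Proof.
have sep (X Y : {set 'I_n}) y : y \notin X -> y \in Y -> #|Y| != 1 ->
    exists v, synchronizes V X v != synchronizes V Y v.
  move=> yX yY Y_neq1; have Y_gt1 : 1 < #|Y|.
    have : 0 < #|Y| by apply/card_gt0P; exists y.
    by move: Y_neq1; case: #|Y| => [|[]].
  by exists (sep_word y); case/andP: (sep_word_separates yX yY Y_gt1) => -> /negbTE->.
case: S T => [S S_neq1] [T T_neq1]; rewrite -val_eqE /= eqEsubset negb_and.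
case/orP => /subsetPn[y y_in y_out]; last exact: sep y_out y_in T_neq1.
by have [v] := sep _ _ _ y_out y_in S_neq1; exists v; rewrite eq_sym.
Qed.

End Vn.

Theorem proposition4 (n : nat) : 2 <= n ->
  state_complexity (Syn (@Vtrans n)) (2 ^ n - n).
Proof.
case: n => [|[|m]] // _; rewrite -[in 2 ^ _ - _](card_ord m.+2); split.
- exists (syn_dfa (@Vtrans m.+2)).
  by split; [exact: syn_dfa_recognizes | exact: card_syn_state].
- apply: syn_dfa_minimal.
  + exact: V_syn_state_reachable.
  + exact: V_syn_states_distinguishable.
Qed.
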